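(* Let $n\ge1$, $k\in\{1,\dots,n\}$, scores $s_1,\dots,s_n\in\mathbb{R}$ not all equal, $p=\frac{n-k}{n}+\frac{1}{2n}$ and $f(x)=\sum_{i=1}^n\rho_p(s_i-x)$. If $x\in\mathbb{R}$ satisfies $f(x)-f(\theta_k)\le \frac{g_m\Delta}{2}$, where $g_m=\min\{\overline{m}-\frac12,\ \underline{m}+\frac12\}$, then $|x-\theta_k|\le\frac{\Delta}{2}$.
   Context: The pinball loss is $\rho_p(x)=p\,x$ if $x\ge0$ and $\rho_p(x)=-(1-p)x$ if $x<0$. The scores sorted in descending order are $\theta_1\ge\cdots\ge\theta_n$; $\theta_k$ is the $k$-th largest score. $\overline{m}$ is the number of indices $j\le k$ with $\theta_j=\theta_k$, and $\underline{m}$ is the number of indices $j>k$ with $\theta_j=\theta_k$. The minimum gap is $\Delta=\min\{|s_i-\theta_k|: s_i\ne\theta_k\}$. *)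

From HB Require Import structures.
From mathcomp Require Import all_boot all_order all_algebra.
Set Implicit Arguments. Unset Strict Implicit. Unset Printing Implicit Defensive.
Import Order.TTheory GRing.Theory Num.Theory.
Local Open Scope ring_scope.

Section Defs.
Variable R : realFieldType.

Definition pinball (p x : R) : R := if 0 <= x then p * x else - ((1 - p) * x).

Definition sorted_scores n (s : 'I_n -> R) : seq R :=
  sort (fun a b => b <= a) [seq s i | i <- enum 'I_n].

(* theta_j, 1-indexed (theta j = the j-th largest score) *)
Definition theta n (s : 'I_n -> R) (j : nat) : R := nth 0 (sorted_scores s) j.-1.

Definition mbar n (s : 'I_n -> R) (k : nat) : nat :=
  count (fun j => theta s j == theta s k) (iota 1 k).

Definition munder n (s : 'I_n -> R) (k : nat) : nat :=
  count (fun j => theta s j == theta s k) (iota k.+1 (n - k)).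

(* Delta = min { |s_i - theta_k| : s_i <> theta_k }.
   The minimum is taken with initial value the maximum of all |s_i - theta_k|,
   which does not change the value when the index set is nonempty. *)
Definition Delta n (s : 'I_n -> R) (k : nat) : R :=
  let t := theta s k in
  \big[Num.min/ \big[Num.max/0]_(i < n) `|s i - t| ]_(i < n | s i != t) `|s i - t|.

Definition qloss n (s : 'I_n -> R) (p x : R) : R := \sum_(i < n) pinball p (s i - x).

End Defs.

(* The quantile loss f is convex and piecewise linear, with a kink at every score.
   At theta_k its right slope is #{i : s_i <= theta_k} - n p >= mbar - 1/2 and its
   left slope is #{i : s_i < theta_k} - n p <= -(munder + 1/2), because p was chosen
   with n p = n - k + 1/2.  Hence f(x) - f(theta_k) >= g_m |x - theta_k|, and the
   hypothesis bounds |x - theta_k| by Delta / 2 once g_m >= 1/2 > 0 is divided out. *)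
From HB Require Import structures.
From mathcomp Require Import all_boot all_order all_algebra.
From mathcomp Require Import ring lra zify.
Set Implicit Arguments. Unset Strict Implicit. Unset Printing Implicit Defensive.
Import Order.TTheory GRing.Theory Num.Theory.
Local Open Scope ring_scope.

Section QuantileLoss.
Variables (R : realFieldType) (p : R).

(* [b] records on which side of [t] the score [s] lies; for [s = t] both choices work. *)
Lemma pinball_subgrad (s t x : R) (b : bool) :
  (b -> s <= t) -> (~~ b -> t <= s) ->
  (b%:R - p) * (x - t) <= pinball p (s - x) - pinball p (s - t).
Proof.
rewrite /pinball; case: b => /= [/(_ isT) st _ | _ /(_ isT) ts];
  by case: ifP => hx; case: ifP => ht; nra.
Qed.

Lemma qloss_subgrad n (s : 'I_n -> R) (b : pred R) (t x : R) :
  {in b, forall y, y <= t} -> {in predC b, forall y, t <= y} ->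
  ((count b (sorted_scores s))%:R - n%:R * p) * (x - t) <= qloss s p x - qloss s p t.
Proof.
move=> b_le b_ge.
have -> : count b (sorted_scores s) = count b [seq s i | i <- enum 'I_n].
  by apply/permP; rewrite perm_sort.
rewrite -sumn_count sumnE !big_map -/(index_enum _) natr_sum.
have -> : n%:R * p = \sum_(i < n) p by rewrite sumr_const card_ord mulr_natl.
rewrite -sumrB mulr_suml /qloss -sumrB.
apply: ler_sum => i _; apply: pinball_subgrad => hb; [exact: b_le | exact: b_ge].
Qed.

End QuantileLoss.

Section OrderStatistics.
Variables (R : realFieldType) (n k : nat) (s : 'I_n -> R).
Hypothesis k_range : (1 <= k <= n)%N.

Let S := sorted_scores s.
Let t := theta s k.

Lemma size_sorted_scores : size S = n.
Proof. by rewrite /S /sorted_scores size_sort size_map size_enum_ord. Qed.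

Lemma sorted_scores_nonincr i j : (i <= j < n)%N -> nth 0 S j <= nth 0 S i.
Proof.
case/andP=> le_ij lt_jn.
have S_sorted : sorted (fun a b : R => b <= a) S by apply: sort_sorted => a b; exact: le_total.
have ge_trans : transitive (fun a b : R => b <= a).
  by move=> a b c ba cb; exact: le_trans cb ba.
apply: (sorted_leq_nth ge_trans (fun a => lexx a) 0 S_sorted);
  rewrite ?inE ?size_sorted_scores //; exact: leq_ltn_trans le_ij lt_jn.
Qed.

Lemma sorted_scoresE : S = [seq nth 0 S j | j <- iota 0 n].
Proof. by rewrite -size_sorted_scores -/(mkseq _ _) mkseq_nth. Qed.

Lemma mbarE : mbar s k = count (fun j => nth 0 S j == t) (iota 0 k).
Proof. by rewrite /mbar -[iota 1 k]/(iota (1 + 0) k) iotaDl count_map. Qed.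

Lemma munderE : munder s k = count (fun j => nth 0 S j == t) (iota k (n - k)).
Proof. by rewrite /munder -add1n iotaDl count_map. Qed.

Lemma mbar_gt0 : (0 < mbar s k)%N.
Proof.
rewrite mbarE -has_count; apply/hasP; exists k.-1; last exact: eqxx.
by rewrite mem_iota; lia.
Qed.

(* Every score in positions k+1..n is at most theta_k. *)
Lemma count_le_theta : (n - k + mbar s k <= count (<= t) S)%N.
Proof.
case/andP: k_range => k_gt0 k_le_n.
rewrite sorted_scoresE count_map mbarE -(subnKC k_le_n) iotaD count_cat subnKC //.
rewrite addnC leq_add //; first by apply: sub_count => j /= /eqP ->.
rewrite -{1}(size_iota k (n - k)) -count_predT; apply/eq_leq/eq_in_count => j.
by rewrite mem_iota /= => hj; symmetry; apply: sorted_scores_nonincr; lia.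
Qed.

(* Every score in positions 1..k is at least theta_k. *)
Lemma count_lt_theta : (count (< t) S + munder s k <= n - k)%N.
Proof.
case/andP: k_range => k_gt0 k_le_n.
rewrite sorted_scoresE count_map munderE -(subnKC k_le_n) iotaD count_cat subnKC //.
have -> : count (preim (nth 0 S) (< t)) (iota 0 k) = 0%N.
  apply/eqP; rewrite -leqn0 leqNgt -has_count; apply/hasPn => j; rewrite mem_iota => hj /=.
  by rewrite -leNgt; apply: sorted_scores_nonincr; lia.
rewrite add0n -{3}(size_iota k (n - k)) -count_predUI.
have -> : count (predI (preim (nth 0 S) (< t)) (fun j => nth 0 S j == t)) (iota k (n - k)) = 0%N.
  apply/eqP; rewrite -leqn0 leqNgt -has_count; apply/hasPn => j _ /=.
  by case: eqP => [->|]; rewrite ?ltxx ?andbF ?andbT.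
by rewrite addn0 count_size.
Qed.

Section Growth.
Variable p : R.
Hypothesis np_eq : n%:R * p = (n - k)%:R + 1 / 2.

Lemma qloss_growth_right x :
  t <= x -> ((mbar s k)%:R - 1 / 2) * (x - t) <= qloss s p x - qloss s p t.
Proof.
move=> t_le_x.
have slope : (mbar s k)%:R - 1 / 2 <= (count (<= t) S)%:R - n%:R * p.
  by rewrite np_eq; have := count_le_theta; rewrite -(ler_nat R) natrD; lra.
apply: le_trans (qloss_subgrad p s (b := <= t) x _ _) => //.
- by nra.
- by move=> y; rewrite inE /= => /negbTE; rewrite leNgt => /negbFE /ltW.
Qed.

Lemma qloss_growth_left x :
  x <= t -> ((munder s k)%:R + 1 / 2) * (t - x) <= qloss s p x - qloss s p t.
Proof.
move=> x_le_t.
have slope : (count (< t) S)%:R - n%:R * p <= - ((munder s k)%:R + 1 / 2).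
  by rewrite np_eq; have := count_lt_theta; rewrite -(ler_nat R) natrD; lra.
apply: le_trans (qloss_subgrad p s (b := < t) x _ _) => //.
- by nra.
- by move=> y; rewrite inE => /ltW.
- by move=> y; rewrite inE /= -leNgt.
Qed.

Lemma qloss_growth x :
  Num.min ((mbar s k)%:R - 1 / 2) ((munder s k)%:R + 1 / 2) * `|x - t|
    <= qloss s p x - qloss s p t.
Proof.
case: (lerP t x) => [t_le_x | x_lt_t].
  apply: le_trans (qloss_growth_right t_le_x).
  by rewrite ler_wpM2r ?subr_ge0 // ge_min lexx.
apply: le_trans (qloss_growth_left (ltW x_lt_t)).
by rewrite ler_wpM2r ?subr_ge0 ?(ltW x_lt_t) // ge_min lexx orbT.
Qed.

End Growth.
End OrderStatistics.

Theorem corollary1 (R : realFieldType) (n k : nat) (s : 'I_n -> R) (x : R) :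
  (1 <= n)%N -> (1 <= k <= n)%N ->
  (exists i j, s i != s j) ->
  let p := (n - k)%:R / n%:R + 1 / (2 * n%:R) in
  let f := qloss s p in
  let gm := Num.min ((mbar s k)%:R - 1 / 2) ((munder s k)%:R + 1 / 2) in
  f x - f (theta s k) <= gm * Delta s k / 2 ->
  `|x - theta s k| <= Delta s k / 2.
Proof.
(* The scores need not be distinct: the growth bound holds regardless. *)
move=> n_gt0 k_range _ p f gm hf.
have np_eq : n%:R * p = (n - k)%:R + 1 / 2.
  by rewrite /p; field; rewrite pnatr_eq0 -lt0n.
have gm_pos : 0 < gm.
  have mbar_ge1 : 1 <= (mbar s k)%:R :> R by rewrite ler1n mbar_gt0.
  have munder_ge0 : 0 <= (munder s k)%:R :> R by [].
  by rewrite lt_min; apply/andP; split; lra.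
have growth := qloss_growth s k_range np_eq x; rewrite -/f -/gm in growth.
rewrite -(ler_pM2l gm_pos) mulrA; exact: le_trans growth hf.
Qed.
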